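(* Let $\nu$ be a positive Borel measure on $\mathbb{C}$, finite on compact sets. The following three statements are pairwise equivalent: (b1) the balayage $\nu^{\mathrm{bal}}$ of $\nu$ from $\mathbb{C}^{\mathrm{up}}$ exists as a positive measure, i.e. $\nu^{\mathrm{bal}}(B)<+\infty$ for every bounded Borel set $B\subset\mathbb{C}$; (b2) for some bounded Borel set $B\subset\mathbb{R}$ of positive Lebesgue measure, $\int_{\mathbb{C}^{\mathrm{up}}}\omega(z,B)\,d\nu(z)<+\infty$; (b3) $\nu$ satisfies the Blaschke condition near infinity in $\mathbb{C}^{\mathrm{up}}$: $\int_{\mathbb{C}^{\mathrm{up}}\setminus D(r_0)}\operatorname{Im}\frac{1}{\bar z}\,d\nu(z)<+\infty$ for some $r_0>0$.
   Context: $\mathbb{C}^{\mathrm{up}}=\{\operatorname{Im}z>0\}$, $\mathbb{C}_{\overline{\mathrm{lw}}}=\{\operatorname{Im}z\le 0\}$, $D(r)$ the open disc of radius $r$ centred at $0$. For $z\in\mathbb{C}^{\mathrm{up}}$ and Borel $B\subset\mathbb{C}$ the harmonic measure is $\omega(z,B)=\frac1\pi\int_{B\cap\mathbb{R}}\frac{\operatorname{Im}z}{(t-\operatorname{Re}z)^2+(\operatorname{Im}z)^2}\,dt$. The balayage from $\mathbb{C}^{\mathrm{up}}$ is $\nu^{\mathrm{bal}}(B):=\int_{\mathbb{C}^{\mathrm{up}}}\omega(z,B)\,d\nu(z)+\nu(B\cap\mathbb{C}_{\overline{\mathrm{lw}}})$. *)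

From HB Require Import structures.
From mathcomp Require Import all_boot all_order all_algebra.
From mathcomp Require Import all_classical all_reals all_analysis.
Set Implicit Arguments. Unset Strict Implicit. Unset Printing Implicit Defensive.
Import Order.TTheory GRing.Theory Num.Theory.
Import numFieldNormedType.Exports.
Local Open Scope classical_set_scope.
Local Open Scope ring_scope.

(* The complex plane C is modelled as R * R, z = (Re z, Im z), with the
   product sigma-algebra (= Borel sigma-algebra of R^2). *)

Definition Cup (R : realType) : set (R * R) := [set z | 0 < z.2].
Arguments Cup : clear implicits.
Definition Clw_closed (R : realType) : set (R * R) := [set z | z.2 <= 0].
Arguments Clw_closed : clear implicits.
Definition disc (R : realType) (r : R) : set (R * R) :=
  [set z | z.1 ^+ 2 + z.2 ^+ 2 < r ^+ 2].

Definition bounded_C (R : realType) (B : set (R * R)) : Prop :=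
  exists M : R, forall z, B z -> z.1 ^+ 2 + z.2 ^+ 2 <= M.
Definition bounded_R (R : realType) (B : set R) : Prop :=
  exists M : R, forall t, B t -> `|t| <= M.

Definition real_trace (R : realType) (B : set (R * R)) : set R :=
  [set t | B (t, 0)].
Definition R_to_C (R : realType) (B : set R) : set (R * R) :=
  [set (t, 0) | t in B].

Definition poisson_kernel (R : realType) (z : R * R) (t : R) : R :=
  z.2 / ((t - z.1) ^+ 2 + z.2 ^+ 2).

Definition harm_measure (R : realType) (z : R * R) (B : set (R * R)) : \bar R :=
  ((pi^-1)%:E * \int[@lebesgue_measure R]_(t in real_trace B)
      (poisson_kernel z t)%:E)%E.

Definition balayage (R : realType) (nu : {measure set (R * R) -> \bar R})
  (B : set (R * R)) : \bar R :=
  (\int[nu]_(z in Cup R) harm_measure z B + nu (B `&` Clw_closed R))%E.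

(* Im (1 / conj z) = Im z / |z|^2 *)
Definition im_inv_conj (R : realType) (z : R * R) : R :=
  z.2 / (z.1 ^+ 2 + z.2 ^+ 2).

From HB Require Import structures.
From mathcomp Require Import all_boot all_order all_algebra.
From mathcomp Require Import all_classical all_reals all_analysis.
From mathcomp Require Import ring lra.
From mathcomp Require Import measurable_realfun.
Import Order.TTheory GRing.Theory Num.Theory.
Import numFieldNormedType.Exports.
Local Open Scope classical_set_scope.
Local Open Scope ring_scope.

(* For [t] in [[-A, A]] and [z] far from the origin, the Poisson kernel
   [Im z / |t - z|^2] is comparable to [Im (1 / conj z) = Im z / |z|^2]:
   it is at least a quarter of it as soon as [|z| >= A], and at most four
   times it as soon as [|z| >= 2 A].  Integrating in [t], the harmonic measure
   of a bounded [B] of positive length is, far out, squeezed between two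
   multiples of [Im (1 / conj z)]; near the origin it is at most [1], the
   Poisson integral over an interval being a difference of arctangents, and
   there [nu] is finite on compact sets.  Hence (b2) gives (b3) directly,
   (b3) gives (b1) by splitting [Cup] along a large disc, and (b1) gives (b2)
   with [B = [0, 1]]. *)

Section nonnegative_integral.
Local Open Scope ereal_scope.
Context {d} {T : measurableType d} {R : realType} (mu : {measure set T -> \bar R}).

(* No measurability is needed: the integral of a nonnegative function is the
   supremum of the integrals of the simple functions below it. *)
Lemma le_integral_nonneg (D : set T) (f g : T -> \bar R) :
  (forall x, D x -> 0 <= f x) -> (forall x, D x -> f x <= g x) ->
  \int[mu]_(x in D) f x <= \int[mu]_(x in D) g x.
Proof.
move=> f0 fg.
have g0 x : D x -> 0 <= g x by move=> Dx; exact: le_trans (f0 _ Dx) (fg _ Dx).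
rewrite !ge0_integralE //; apply: ereal_sup_le => _ [h hf <-]; exists h => //= x.
by apply: le_trans (hf x) _; exact: lee_restrict.
Qed.

Lemma subset_integral_nonneg (f : T -> \bar R) [D1 D2 : set T] :
  D1 `<=` D2 -> (forall x, D2 x -> 0 <= f x) ->
  \int[mu]_(x in D1) f x <= \int[mu]_(x in D2) f x.
Proof.
move=> D12 f0; rewrite (integral_mkcond D1) (integral_mkcond D2).
apply: le_integral_nonneg => x _; first by apply: erestrict_ge0 => y /D12 /f0.
rewrite /patch; case: ifPn => [/[1!inE] /D12 D2x|_]; first by rewrite mem_set.
by case: ifPn => // /[1!inE] /f0.
Qed.

End nonnegative_integral.

Section plane.
Context {R : realType}.

Lemma measurable_inv : measurable_fun [set: R] (@GRing.inv R).
Proof.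
rewrite -(setUv [set 0%R]) setUC; apply/measurable_funU => //; first exact: measurableC.
split; last exact: measurable_fun_set1.
apply: open_continuous_measurable_fun.
  exact/closed_openC/accessible_closed_set1/hausdorff_accessible/Rhausdorff.
by move=> x /[1!inE] /eqP x0; exact: inv_continuous.
Qed.

Lemma measurable_sqr_norm : measurable_fun [set: R * R] (fun z => z.1 ^+ 2 + z.2 ^+ 2).
Proof. by apply: measurable_funD; apply: measurable_funX. Qed.

Lemma measurable_im_inv_conj : measurable_fun [set: R * R] (@im_inv_conj R).
Proof.
apply: measurable_funM => //.
exact: measurableT_comp measurable_inv measurable_sqr_norm.
Qed.

Lemma measurable_Cup : measurable (Cup R).
Proof.
have -> : Cup R = snd @^-1` `]0, +oo[.
  by apply/seteqP; split => z /=; rewrite in_itv /= andbT.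
by rewrite -[X in measurable X]setTI; exact: measurable_snd.
Qed.

Lemma measurable_Clw_closed : measurable (Clw_closed R).
Proof.
have -> : Clw_closed R = snd @^-1` `]-oo, 0%R].
  by apply/seteqP; split => z /=; rewrite in_itv.
by rewrite -[X in measurable X]setTI; exact: measurable_snd.
Qed.

Lemma measurable_disc (r : R) : measurable (disc r).
Proof.
have -> : disc r = (fun z : R * R => z.1 ^+ 2 + z.2 ^+ 2) @^-1` `]-oo, r ^+ 2[.
  by apply/seteqP; split => z /=; rewrite in_itv.
by rewrite -[X in measurable X]setTI; exact: measurable_sqr_norm.
Qed.

Lemma im_inv_conj_ge0 (z : R * R) : Cup R z -> 0 <= im_inv_conj z.
Proof. by move=> z0; apply: divr_ge0; rewrite ?addr_ge0 ?sqr_ge0 ?ltW. Qed.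

Definition square (a : R) : set (R * R) := `[- a, a] `*` `[- a, a].

Lemma compact_square (a : R) : compact (square a).
Proof. by apply: compact_setX; exact: segment_compact. Qed.

Lemma measurable_square (a : R) : measurable (square a).
Proof. exact: measurableX. Qed.

Lemma disc_sub_square (r : R) : 0 <= r -> disc r `<=` square r.
Proof.
move=> r0 z; rewrite /disc /square /= !in_itv /= => zr.
have := sqr_ge0 z.1; have := sqr_ge0 z.2.
by split; apply/andP; split; nra.
Qed.

Lemma bounded_C_sub_square (B : set (R * R)) :
  bounded_C B -> exists2 A, 0 < A & B `<=` square A.
Proof.
case=> M BM; exists (1 + `|M|); first by rewrite ltr_pwDl.
move=> z /BM zM; have := ler_norm M; have := sqr_ge0 z.1; have := sqr_ge0 z.2.
by rewrite /square /= !in_itv /=; split; apply/andP; split; nra.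
Qed.

Lemma bounded_R_sub_itv (B : set R) :
  bounded_R B -> exists2 A, 0 < A & B `<=` `[- A, A].
Proof.
case=> M BM; exists (1 + `|M|); first by rewrite ltr_pwDl.
move=> t /BM tM; rewrite /= in_itv /= -ler_norml.
by apply: le_trans tM _; rewrite ler_wpDl // ler_norm.
Qed.

Lemma lebesgue_measure_sym_itv (A : R) : 0 < A ->
  lebesgue_measure (`[- A, A] : set R) = (A + A)%:E.
Proof. by move=> A0; rewrite lebesgue_measure_itv /= lte_fin gtrN // -EFinB opprK. Qed.

Lemma real_trace_square {A : R} {B : set (R * R)} :
  B `<=` square A -> real_trace B `<=` `[- A, A].
Proof. by move=> BA t /BA []. Qed.

Lemma real_trace_R_to_C (B : set R) : real_trace (R_to_C B) = B.
Proof. by apply/seteqP; split => t /=; [case=> s Bs [<-] | exists t]. Qed.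

End plane.

Section poisson_kernel.
Context {R : realType}.
Implicit Types (x y t A : R) (z : R * R).

Lemma poisson_kernel_ge0 z t : 0 < z.2 -> 0 <= poisson_kernel z t.
Proof. by move=> z0; apply: divr_ge0; rewrite ?addr_ge0 ?sqr_ge0 ?ltW. Qed.

Lemma continuous_poisson_kernel x y : 0 < y -> continuous (poisson_kernel (x, y)).
Proof.
move=> y0 t; apply: cvgM; first exact: cvg_cst.
apply: cvgV; first by rewrite gt_eqF // ltr_pwDr ?exprn_gt0 ?sqr_ge0.
apply: cvgD; last exact: cvg_cst.
by rewrite expr2; apply: cvgM; apply: cvgB; (exact: cvg_id || exact: cvg_cst).
Qed.

Lemma integral_poisson_kernel_itv x y a b : 0 < y -> a < b ->
  (\int[lebesgue_measure]_(t in `[a, b]) (poisson_kernel (x, y) t)%:E =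
    (atan ((b - x) / y) - atan ((a - x) / y))%:E)%E.
Proof.
move=> y0 ab; pose u t := (t - x) / y.
have du t : is_derive t 1 u y^-1.
  by apply: is_derive_eq; rewrite scaler0 add0r subr0 /GRing.scale /= mulr1.
have Fu t : derivable (atan \o u) t 1.
  apply/derivable1_diffP/differentiable_comp; last exact/derivable1_diffP/derivable_atan.
  exact/derivable1_diffP/ex_derive.
have cFu : continuous (atan \o u).
  move=> t; apply: continuous_comp; last exact: continuous_atan.
  by apply: cvgM; [apply: cvgB; (exact: cvg_id || exact: cvg_cst) | exact: cvg_cst].
rewrite (@continuous_FTC2 R _ (atan \o u)) //.
- exact/continuous_subspaceT/continuous_poisson_kernel.
- by split; [move=> t _; exact: Fu | exact/cvg_at_right_filter/cFu | exact/cvg_at_left_filter/cFu].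
move=> t _; rewrite (@derive1_comp _ u atan); last 2 first.
- exact: ex_derive.
- exact: derivable_atan.
rewrite derive1_atan derive1E derive_val.
have ? : y != 0 by rewrite gt_eqF.
have ? : (t - x) ^+ 2 + y ^+ 2 != 0 by rewrite gt_eqF // ltr_pwDr ?exprn_gt0 ?sqr_ge0.
by rewrite /poisson_kernel /u /=; field; apply/andP.
Qed.

Lemma poisson_kernel_le {z t A} : 0 < z.2 -> t \in `[- A, A] ->
  4 * A ^+ 2 <= z.1 ^+ 2 + z.2 ^+ 2 -> poisson_kernel z t <= 4 * im_inv_conj z.
Proof.
case: z => x y /= y0; rewrite in_itv /= => /andP[At tA] zA.
have S0 : 0 < x ^+ 2 + y ^+ 2 by rewrite ltr_pwDr ?exprn_gt0 ?sqr_ge0.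
have D0 : 0 < (t - x) ^+ 2 + y ^+ 2 by rewrite ltr_pwDr ?exprn_gt0 ?sqr_ge0.
have zt : x ^+ 2 + y ^+ 2 <= 4 * ((t - x) ^+ 2 + y ^+ 2).
  by have := sqr_ge0 (x - 2 * t); nra.
rewrite /poisson_kernel /im_inv_conj /= mulrCA; apply: ler_wpM2l; first exact: ltW.
by rewrite ler_pdivlMr // mulrC ler_pdivrMr.
Qed.

Lemma poisson_kernel_ge {z t A} : 0 < z.2 -> t \in `[- A, A] ->
  A ^+ 2 <= z.1 ^+ 2 + z.2 ^+ 2 -> im_inv_conj z / 4 <= poisson_kernel z t.
Proof.
case: z => x y /= y0; rewrite in_itv /= => /andP[At tA] zA.
have S0 : 0 < x ^+ 2 + y ^+ 2 by rewrite ltr_pwDr ?exprn_gt0 ?sqr_ge0.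
have zt : (t - x) ^+ 2 + y ^+ 2 <= 4 * (x ^+ 2 + y ^+ 2).
  by have := sqr_ge0 (x + t); nra.
rewrite /poisson_kernel /im_inv_conj /= -mulrA -invfM; apply: ler_wpM2l; first exact: ltW.
by rewrite lef_pV2 ?posrE ?mulr_gt0 // ?ltr_pwDr ?exprn_gt0 ?sqr_ge0 // mulrC.
Qed.

End poisson_kernel.

Section harmonic_measure.
Context {R : realType}.
Local Open Scope ereal_scope.
Implicit Types (z : R * R) (A : R).

Lemma harm_measure_ge0 z (B : set (R * R)) : (0 < z.2)%R -> 0 <= harm_measure z B.
Proof.
move=> z0; apply: mule_ge0; first by rewrite lee_fin invr_ge0 pi_ge0.
by apply: integral_ge0 => t _; rewrite lee_fin poisson_kernel_ge0.
Qed.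

Lemma integral_poisson_kernel_subset z {D1 D2 : set R} : (0 < z.2)%R -> D1 `<=` D2 ->
  \int[lebesgue_measure]_(t in D1) (poisson_kernel z t)%:E <=
  \int[lebesgue_measure]_(t in D2) (poisson_kernel z t)%:E.
Proof.
move=> z0 D12; apply: subset_integral_nonneg => // t _.
by rewrite lee_fin poisson_kernel_ge0.
Qed.

Lemma harm_measure_le1 {z} {B : set (R * R)} {A} : (0 < z.2)%R -> (0 < A)%R ->
  real_trace B `<=` `[(- A)%R, A] -> harm_measure z B <= 1.
Proof.
move=> z0 A0 BA.
apply: (@le_trans _ _ ((pi^-1)%:E * pi%:E)); last first.
  by rewrite -EFinM mulVf // gt_eqF // pi_gt0.
apply: lee_wpmul2l; first by rewrite lee_fin invr_ge0 pi_ge0.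
apply: le_trans (integral_poisson_kernel_subset z z0 BA) _.
case: z z0 => x y /= y0; rewrite integral_poisson_kernel_itv ?gtrN // lee_fin.
by have := atan_ltpi2 ((A - x) / y); have := atan_gtNpi2 ((- A - x) / y); lra.
Qed.

Lemma harm_measure_le_im_inv_conj {z} {B : set (R * R)} {A} : (0 < z.2)%R -> (0 < A)%R ->
  real_trace B `<=` `[(- A)%R, A] -> (4 * A ^+ 2 <= z.1 ^+ 2 + z.2 ^+ 2)%R ->
  harm_measure z B <= ((8 * A / pi) * im_inv_conj z)%:E.
Proof.
move=> z0 A0 BA zA.
have kernel_le : \int[lebesgue_measure]_(t in real_trace B) (poisson_kernel z t)%:E <=
    \int[lebesgue_measure]_(t in `[(- A)%R, A]) (cst (4 * im_inv_conj z)%:E) t.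
  apply: le_trans (integral_poisson_kernel_subset z z0 BA) _.
  apply: le_integral_nonneg => t tA; first by rewrite lee_fin poisson_kernel_ge0.
  by rewrite lee_fin (poisson_kernel_le z0 tA zA).
rewrite integral_cst // in kernel_le.
apply: le_trans (lee_wpmul2l _ kernel_le) _; first by rewrite lee_fin invr_ge0 pi_ge0.
rewrite [X in _ * (_ * X)](_ : _ = (A + A)%:E); last exact: lebesgue_measure_sym_itv.
by rewrite -!EFinM lee_fin (_ : pi^-1 * _ = 8 * A / pi * im_inv_conj z)%R //; ring.
Qed.

Lemma harm_measure_ge_im_inv_conj {z} {B : set R} {A} : (0 < z.2)%R -> measurable B ->
  B `<=` `[(- A)%R, A] -> (A ^+ 2 <= z.1 ^+ 2 + z.2 ^+ 2)%R ->
  (pi^-1 * (im_inv_conj z / 4))%:E * lebesgue_measure B <= harm_measure z (R_to_C B).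
Proof.
move=> z0 mB BA zA; rewrite /harm_measure real_trace_R_to_C.
have kernel_ge : \int[lebesgue_measure]_(t in B) (cst (im_inv_conj z / 4)%:E) t <=
    \int[lebesgue_measure]_(t in B) (poisson_kernel z t)%:E.
  apply: le_integral_nonneg => t Bt.
    by rewrite lee_fin divr_ge0 ?im_inv_conj_ge0.
  by rewrite lee_fin (poisson_kernel_ge z0 (BA _ Bt) zA).
rewrite integral_cst // in kernel_ge.
by rewrite EFinM -muleA lee_wpmul2l // lee_fin invr_ge0 pi_ge0.
Qed.

End harmonic_measure.

Section blaschke_majorant.
Context {R : realType}.
Local Open Scope ereal_scope.

Definition blaschke_majorant (C r0 R1 : R) (z : R * R) :=
  (\1_(disc R1) z)%:E + ((fun z => (C * im_inv_conj z)%:E) \_ (~` disc r0)) z.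

Lemma harm_measure_le_blaschke_majorant {B : set (R * R)} {A r0 R1 : R} {z} :
  (0 < A)%R -> real_trace B `<=` `[(- A)%R, A] ->
  (0 <= r0)%R -> (r0 <= R1)%R -> (2 * A <= R1)%R -> Cup R z ->
  harm_measure z B <= blaschke_majorant (8 * A / pi)%R r0 R1 z.
Proof.
move=> A0 BA r0_ge0 r0R1 AR1 z0; rewrite /blaschke_majorant patchE.
have [zR1|zR1] := pselect (disc R1 z).
  rewrite indicE mem_set //; apply: le_trans (harm_measure_le1 z0 A0 BA) _.
  rewrite leeDl //; case: ifP => // _.
  by rewrite lee_fin mulr_ge0 ?im_inv_conj_ge0 // divr_ge0 ?mulr_ge0 ?ltW ?pi_gt0.
have R1z : (R1 ^+ 2 <= z.1 ^+ 2 + z.2 ^+ 2)%R by move/negP: zR1; rewrite -leNgt.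
have farA : (4 * A ^+ 2 <= z.1 ^+ 2 + z.2 ^+ 2)%R by nra.
have farr0 : (~` disc r0) z by apply/negP; rewrite -leNgt; nra.
have -> : \1_(disc R1) z = 0%R :> R by rewrite indicE memNset.
by rewrite add0e ifT ?inE //; exact: harm_measure_le_im_inv_conj.
Qed.

Lemma integral_blaschke_majorant (nu : {measure set (R * R) -> \bar R}) (C r0 R1 : R) :
  (0 <= C)%R -> \int[nu]_(z in Cup R) blaschke_majorant C r0 R1 z =
  nu (disc R1 `&` Cup R) + C%:E * \int[nu]_(z in Cup R `\` disc r0) (im_inv_conj z)%:E.
Proof.
move=> C0; have mCup := @measurable_Cup R.
have mCim : measurable_fun [set: R * R] (fun z => (C * im_inv_conj z)%:E).
  by apply/measurable_EFinP/measurable_funM => //; exact: measurable_im_inv_conj.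
rewrite ge0_integralD //; last 3 first.
- by apply/measurable_EFinP/measurable_indic; exact: measurable_disc.
- by move=> z z0; rewrite patchE; case: ifP => // _; rewrite lee_fin mulr_ge0 ?im_inv_conj_ge0.
- apply: (proj1 (measurable_restrict _ (measurableC (measurable_disc r0)) mCup)).
  exact: measurable_funTS mCim.
rewrite integral_indic //; last exact: measurable_disc.
rewrite -integral_mkcondr -setDE; under eq_integral do rewrite EFinM.
rewrite ge0_integralZl_EFin //.
- by apply: measurableD => //; exact: measurable_disc.
- by move=> z [z0 _]; rewrite lee_fin im_inv_conj_ge0.
- by apply/measurable_EFinP; apply: measurable_funTS; exact: measurable_im_inv_conj.
Qed.

End blaschke_majorant.

Section balayage_criteria.
Context {R : realType} (nu : {measure set (R * R) -> \bar R}).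
Local Open Scope ereal_scope.

Definition balayage_finite : Prop :=
  forall B : set (R * R), measurable B -> bounded_C B -> balayage nu B < +oo.

Definition harm_measure_integrable : Prop :=
  exists B : set R, [/\ measurable B, bounded_R B, 0 < lebesgue_measure B &
    \int[nu]_(z in Cup R) harm_measure z (R_to_C B) < +oo].

Definition blaschke_near_infinity : Prop :=
  exists r0 : R, (0 < r0)%R /\
    \int[nu]_(z in Cup R `\` disc r0) (im_inv_conj z)%:E < +oo.

Lemma balayage_finite_harm_measure_integrable :
  balayage_finite -> harm_measure_integrable.
Proof.
move=> bal_fin; exists `[0%R, 1%R]%classic; split.
- exact: measurable_itv.
- by exists 1%R => t; rewrite /= in_itv /= => /andP[t0 t1]; rewrite ger0_norm.
- by rewrite lebesgue_measure_itv /= lte_fin ltr01 -EFinB subr0 lte_fin ltr01.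
have I01E : R_to_C (`[0%R, 1%R] : set R) = `[0%R, 1%R] `*` [set 0%R].
  by apply/seteqP; split => [_ [t t01 <-] | [t _] /= [t01 ->]]; [|exists t].
apply: le_lt_trans (bal_fin _ _ _); first exact: leeDl.
- by rewrite I01E; exact: measurableX.
exists 1%R => _ [t + <-]; rewrite /= in_itv /= => /andP[t0 t1].
by rewrite expr0n /= addr0; nra.
Qed.

Lemma harm_measure_integrable_blaschke :
  harm_measure_integrable -> blaschke_near_infinity.
Proof.
case=> B [mB /bounded_R_sub_itv[A A0 BA] B_gt0 harm_fin].
have [m Bm m0] : exists2 m, lebesgue_measure B = m%:E & (0 < m)%R.
  have : lebesgue_measure B <= (A + A)%:E.
    rewrite -lebesgue_measure_sym_itv //.
    by apply: le_measure; rewrite ?inE //; exact: measurable_itv.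
  move: B_gt0; case: (lebesgue_measure B) => [m||] //; rewrite lte_fin.
  by exists m.
exists A; split => //.
pose k := (pi^-1 * m / 4)%R.
have k0 : (0 < k)%R by rewrite divr_gt0 // mulr_gt0 // invr_gt0 pi_gt0.
have mCupD : measurable (Cup R `\` disc A).
  by apply: measurableD; [exact: measurable_Cup | exact: measurable_disc].
have : \int[nu]_(z in Cup R `\` disc A) (k%:E * (im_inv_conj z)%:E) < +oo.
  apply: le_lt_trans harm_fin; apply: le_trans (subset_integral_nonneg _ _ (@subDsetl _ _ _) _).
  - apply: le_integral_nonneg => z [z0 zA].
      by rewrite -EFinM lee_fin mulr_ge0 ?im_inv_conj_ge0 // ltW.
    move/negP: zA; rewrite -leNgt => zA.
    apply: le_trans (harm_measure_ge_im_inv_conj z0 mB BA zA); rewrite Bm -!EFinM lee_fin.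
    by rewrite (_ : _ * m = k * im_inv_conj z)%R // /k; ring.
  - by move=> z z0; exact: harm_measure_ge0.
rewrite ge0_integralZl_EFin ?ltW //; last 2 first.
- by move=> z [z0 _]; rewrite lee_fin im_inv_conj_ge0.
- by apply/measurable_EFinP; apply: measurable_funTS; exact: measurable_im_inv_conj.
move=> kI_fin; rewrite ltey; apply: contraTneq kI_fin => ->.
by rewrite mulry gtr0_sg // mul1e ltxx.
Qed.

Lemma blaschke_balayage_finite :
  (forall K : set (R * R), compact K -> nu K < +oo) ->
  blaschke_near_infinity -> balayage_finite.
Proof.
move=> nu_cpt [r0 [r0_gt0 blaschke]] B mB /bounded_C_sub_square[A A0 BA].
have nu_square a : nu (square a) < +oo by apply: nu_cpt; exact: compact_square.
pose R1 := Num.max r0 (2 * A)%R.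
have r0R1 : (r0 <= R1)%R by rewrite le_max lexx.
have AR1 : (2 * A <= R1)%R by rewrite le_max lexx orbT.
have C_ge0 : (0 <= 8 * A / pi)%R by rewrite divr_ge0 ?mulr_ge0 ?ltW ?pi_gt0.
rewrite /balayage; apply: lte_add_pinfty.
- apply: (@le_lt_trans _ _ (\int[nu]_(z in Cup R) blaschke_majorant (8 * A / pi)%R r0 R1 z)).
    apply: le_integral_nonneg => z z0; first exact: harm_measure_ge0.
    exact: harm_measure_le_blaschke_majorant A0 (real_trace_square BA) (ltW r0_gt0) r0R1 AR1 z0.
  rewrite integral_blaschke_majorant //; apply: lte_add_pinfty; last exact: lte_mul_pinfty.
  apply: le_lt_trans (nu_square R1); apply: le_measure; rewrite ?inE.
  + by apply: measurableI; [exact: measurable_disc | exact: measurable_Cup].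
  + exact: measurable_square.
  + move=> z [zR1 _]; apply: disc_sub_square zR1.
    exact: le_trans (ltW r0_gt0) r0R1.
- apply: le_lt_trans (nu_square A); apply: le_measure; rewrite ?inE.
  + by apply: measurableI => //; exact: measurable_Clw_closed.
  + exact: measurable_square.
  + by move=> z [/BA].
Qed.

End balayage_criteria.

Theorem corollary1 (R : realType) (nu : {measure set (R * R) -> \bar R})
  (hfin : forall K : set (R * R), compact K -> (nu K < +oo)%E) :
  let b1 := forall B : set (R * R), measurable B -> bounded_C B ->
              (balayage nu B < +oo)%E in
  let b2 := exists B : set R, [/\ measurable B, bounded_R B,
              (0 < @lebesgue_measure R B)%E &
              (\int[nu]_(z in Cup R) harm_measure z (R_to_C B) < +oo)%E] in
  let b3 := exists r0 : R, 0 < r0 /\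
              (\int[nu]_(z in Cup R `\` disc r0) (im_inv_conj z)%:E < +oo)%E in
  (b1 <-> b2) /\ (b2 <-> b3) /\ (b1 <-> b3).
Proof.
move=> b1 b2 b3.
have b12 : b1 -> b2 := @balayage_finite_harm_measure_integrable R nu.
have b23 : b2 -> b3 := @harm_measure_integrable_blaschke R nu.
have b31 : b3 -> b1 := @blaschke_balayage_finite R nu hfin.
tauto.
Qed.
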